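(* Let $l\ge1$, $L=a^l$ on $\mathcal H=\ell^2(\mathbb N)$ (single jump operator, $H=0$), $Q$ the closure of $L^\dagger L=a^{\dagger l}a^l$, $G=-\tfrac12Q$ and $\Lambda=\mathrm{Id}+a^{l\dagger}a^l$. Then: for every $k\ge0$, $\mathcal H^k=\{\sum_m\psi_m|m\rangle:\sum_m(1+m^{kl})|\psi_m|^2<\infty\}$; $a^{l\dagger}a^l$ with domain $\mathcal H^2$ is self-adjoint; $L\in B(\mathcal H^{m+1},\mathcal H^m)$ for all $m\in\mathbb N$; and for all $u\in\mathcal H^6$, $$2\mathrm{Re}\langle\Lambda^2Gu|\Lambda^2u\rangle+\|\Lambda^2Lu\|^2\le0 .$$ Consequently Assumption A holds with $\gamma=0$.
   Context: $(|m\rangle)_{m\in\mathbb N}$ is the Fock (canonical) basis of $\ell^2(\mathbb N)$, $a|m+1\rangle=\sqrt{m+1}|m\rangle$, $a|0\rangle=0$, $a^\dagger|m\rangle=\sqrt{m+1}|m+1\rangle$. For $\Lambda\ge\mathrm{Id}$ self-adjoint, $\mathcal H^n=\mathcal D(\Lambda^{n/2})$ with norm $\|\Lambda^{n/2}u\|$, $B(\mathcal H^m,\mathcal H^n)$ the bounded operators between them. Assumption A (no Hamiltonian): jump operators $L_j$ closed; $\bigcap_j\mathcal D(L_j^\dagger L_j)$ dense and $\sum_jL_j^\dagger L_j$ essentially self-adjoint on it with closure $Q$; $G=-\tfrac12Q$; $\Lambda=Q+\mathrm{Id}$; $L_j\in B(\mathcal H^5,\mathcal H^4)$; and there is $\gamma\ge0$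 with $2\mathrm{Re}\langle\Lambda^2Gu|\Lambda^2u\rangle+\sum_j\|\Lambda^2L_ju\|^2\le\gamma\|\Lambda^2u\|^2$ for all $u\in\mathcal H^6$. *)

(* Vectors of l^2(N) are complex sequences u : nat -> C in the Fock basis,
   u = sum_m u m |m>.  Operators are given by their (formal, componentwise)
   action on sequences; domains are stated explicitly. *)
From Stdlib Require Import Reals.
From Coquelicot Require Import Coquelicot.
Open Scope R_scope.

Definition seqC := nat -> C.

Definition sqn (z : C) : R := Cmod z ^ 2.

Definition l2 (u : seqC) : Prop := ex_series (fun m => sqn (u m)).
Definition norm2 (u : seqC) : R := Series (fun m => sqn (u m)).

Definition inner (u v : seqC) : C :=
  (Series (fun m => Re (Cmult (Cconj (u m)) (v m))),
   Series (fun m => Im (Cmult (Cconj (u m)) (v m)))).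

Definition seq_sub (u v : seqC) : seqC := fun m => Cminus (u m) (v m).
Definition seq_add (u v : seqC) : seqC := fun m => Cplus (u m) (v m).
Definition seq_scal (c : C) (u : seqC) : seqC := fun m => Cmult c (u m).

(* annihilation operator: a|m+1> = sqrt(m+1)|m>, a|0> = 0,
   i.e. (a u)_m = sqrt(m+1) u_(m+1) *)
Definition ann (u : seqC) : seqC :=
  fun m => Cmult (RtoC (sqrt (INR (S m)))) (u (S m)).

(* creation operator: a^dag|m> = sqrt(m+1)|m+1>,
   i.e. (a^dag u)_0 = 0, (a^dag u)_(m+1) = sqrt(m+1) u_m *)
Definition cre (u : seqC) : seqC :=
  fun m => match m with
           | O => RtoC 0
           | S k => Cmult (RtoC (sqrt (INR (S k)))) (u k)
           end.

Definition Lop (l : nat) (u : seqC) : seqC := Nat.iter l ann u.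
Definition LdagL (l : nat) (u : seqC) : seqC := Nat.iter l cre (Lop l u).
Definition Gop (l : nat) (u : seqC) : seqC := seq_scal (RtoC (- / 2)) (LdagL l u).
Definition Lam (l : nat) (u : seqC) : seqC := seq_add u (LdagL l u).
Definition Lam_pow (l j : nat) (u : seqC) : seqC := Nat.iter j (Lam l) u.

(* H^k = D(Lambda^{k/2}).  For k = 2j: u with Lambda^i u in l^2 for all i <= j.
   For k = 2j+1: additionally Lambda^j u in D(Lambda^{1/2}) = D(L) (form domain),
   i.e. L Lambda^j u in l^2, since ||Lambda^{1/2} v||^2 = ||v||^2 + ||L v||^2. *)
Definition inH (l k : nat) (u : seqC) : Prop :=
  (forall i, (i <= Nat.div2 k)%nat -> l2 (Lam_pow l i u)) /\
  (Nat.odd k = true -> l2 (Lop l (Lam_pow l (Nat.div2 k) u))).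

(* ||u||_{H^k} = ||Lambda^{k/2} u|| *)
Definition normH (l k : nat) (u : seqC) : R :=
  sqrt (norm2 (Lam_pow l (Nat.div2 k) u)
        + (if Nat.odd k then norm2 (Lop l (Lam_pow l (Nat.div2 k) u)) else 0)).

Definition dense_dom (D : seqC -> Prop) : Prop :=
  (forall u, D u -> l2 u) /\
  (forall v eps, l2 v -> 0 < eps -> exists u, D u /\ norm2 (seq_sub u v) < eps).

Definition adj_graph (D : seqC -> Prop) (T : seqC -> seqC) (v w : seqC) : Prop :=
  l2 v /\ l2 w /\ forall u, D u -> inner v (T u) = inner w u.

Definition self_adjoint (D : seqC -> Prop) (T : seqC -> seqC) : Prop :=
  dense_dom D /\ (forall u, D u -> l2 (T u)) /\
  (forall v w, adj_graph D T v w <-> (D v /\ w = T v)).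

(* Everything is diagonal in the Fock basis: [a^{l†} a^l |n> = f(n) |n>] with
   [f(n) = n (n-1) ... (n-l+1)] the falling factorial, which is comparable to [n^l].
   Hence [Λ^k] has eigenvalues [(1 + f(n))^k], [H^k] is the weighted ℓ² space with
   weight [(1 + f(n))^k ≍ 1 + n^{kl}], and [a^{l†} a^l] is a real multiplication
   operator, self-adjoint on its natural domain.  Finally [L |n + l> = sqrt(f(n + l)) |n>]
   moves mass down the ladder, where the nondecreasing weights [(1 + f)^k] are smaller:
   this gives [L ∈ B(H^{m+1}, H^m)] with norm at most 1 and the dissipativity estimate. *)

From Stdlib Require Import Reals Lra Lia FunctionalExtensionality.
From Coquelicot Require Import Coquelicot.
Open Scope R_scope.

Fixpoint falling (l n : nat) : R :=
  match l, n with
  | O, _ => 1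
  | S _, O => 0
  | S l', S k => INR (S k) * falling l' k
  end.

Lemma falling_ge0 l n : 0 <= falling l n.
Proof.
  revert n; induction l as [|l IH]; intros [|k]; cbn [falling pow]; try lra.
  apply Rmult_le_pos; [apply pos_INR | apply IH].
Qed.

Lemma falling_lt l n : (n < l)%nat -> falling l n = 0.
Proof.
  revert n; induction l as [|l IH]; intros [|k] Hn; cbn [falling]; try lia; try lra.
  rewrite IH by lia; ring.
Qed.

Lemma falling_le_mono l n m : (n <= m)%nat -> falling l n <= falling l m.
Proof.
  revert n m; induction l as [|l IH]; intros [|n] [|m] Hnm; cbn [falling]; try lia; try lra.
  - apply Rmult_le_pos; [apply pos_INR | apply falling_ge0].
  - apply Rmult_le_compat; try apply pos_INR; try apply falling_ge0.
    + apply le_INR; lia.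
    + apply IH; lia.
Qed.

Lemma falling_le_pow l n : falling l n <= INR n ^ l.
Proof.
  revert n; induction l as [|l IH]; intros [|k]; cbn [falling pow]; try lra.
  { rewrite Rmult_0_l; lra. }
  apply Rmult_le_compat_l; [apply pos_INR |].
  apply (Rle_trans _ _ _ (IH k)), pow_incr.
  split; [apply pos_INR | apply le_INR; lia].
Qed.

Lemma pow_le_falling l n : (l <= n)%nat -> (INR n - INR l + 1) ^ l <= falling l n.
Proof.
  revert n; induction l as [|l IH]; intros [|k] Hln; cbn [falling pow]; try lra; try lia.
  pose proof (le_INR l k ltac:(lia)). pose proof (pos_INR l). rewrite !S_INR.
  apply Rmult_le_compat; [lra | apply pow_le; lra | lra |].
  replace (INR k + 1 - (INR l + 1) + 1) with (INR k - INR l + 1) by ring.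
  apply IH; lia.
Qed.

Lemma ex_series_le_nonneg (a b : nat -> R) :
  (forall n, 0 <= a n <= b n) -> ex_series b -> ex_series a.
Proof.
  intros Hab Hb; apply (ex_series_le a b); [intros n | exact Hb].
  change (norm (a n)) with (Rabs (a n)); rewrite Rabs_pos_eq; apply Hab.
Qed.

Lemma ex_series_plus_nonneg_iff (a b : nat -> R) :
  (forall n, 0 <= a n) -> (forall n, 0 <= b n) ->
  ex_series a /\ ex_series b <-> ex_series (fun n => a n + b n).
Proof.
  intros Ha Hb; split.
  - intros [Ea Eb]; exact (ex_series_plus a b Ea Eb).
  - intros E; split; apply (ex_series_le_nonneg _ _) with (2 := E);
      intros n; specialize (Ha n); specialize (Hb n); lra.
Qed.

Lemma ex_series_shift_iff (a : nat -> R) s :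
  ex_series (fun n => a (n + s)%nat) <-> ex_series a.
Proof.
  rewrite (ex_series_incr_n a s).
  split; apply ex_series_ext; intros n; f_equal; lia.
Qed.

Lemma sum_f_R0_zero (a : nat -> R) N : (forall n, (n <= N)%nat -> a n = 0) -> sum_f_R0 a N = 0.
Proof.
  induction N as [|N IH]; intros Ha; simpl.
  - apply Ha; lia.
  - rewrite IH, (Ha (S N)) by (lia || (intros; apply Ha; lia)); ring.
Qed.

Lemma Series_shift_vanishing (b : nat -> R) s :
  (forall n, (n < s)%nat -> b n = 0) -> ex_series b ->
  Series (fun n => b (n + s)%nat) = Series b.
Proof.
  intros Hz Hb; destruct s as [|s].
  - apply Series_ext; intros n; f_equal; lia.
  - rewrite (Series_incr_n b (S s)) by (lia || exact Hb).
    rewrite sum_f_R0_zero by (intros; apply Hz; lia).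
    rewrite Rplus_0_l; apply Series_ext; intros n; f_equal; lia.
Qed.

Lemma is_series_0 : is_series (fun _ : nat => 0) 0.
Proof.
  apply (filterlim_ext (fun _ => 0)); [| apply filterlim_const].
  intros n; rewrite sum_n_const; ring.
Qed.

Lemma ex_series_finite_support (a : nat -> R) N :
  (forall n, (N < n)%nat -> a n = 0) -> ex_series a.
Proof.
  intros Ha; apply (proj2 (ex_series_incr_n a (S N))).
  exists 0; apply (is_series_ext (fun _ => 0)); [| exact is_series_0].
  intros n; rewrite Ha by lia; reflexivity.
Qed.

Lemma Series_single (a : nat -> R) m : (forall n, n <> m -> a n = 0) -> Series a = a m.
Proof.
  intros Ha.
  assert (Ea : ex_series a) by (apply (ex_series_finite_support a m); intros; apply Ha; lia).
  rewrite (Series_incr_n a (S m)) by (lia || exact Ea); simpl Nat.pred.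
  rewrite (Series_ext _ (fun _ => 0)), (is_series_unique _ _ is_series_0)
    by (intros; apply Ha; lia).
  destruct m as [|m]; simpl; [ring |].
  rewrite sum_f_R0_zero by (intros; apply Ha; lia); ring.
Qed.

Lemma Series_tail_lt (a : nat -> R) eps : ex_series a -> 0 < eps ->
  exists N, Series (fun n => if (n <=? N)%nat then 0 else a n) < eps.
Proof.
  intros Ea Heps.
  assert (Hlim : is_lim_seq (sum_n a) (Series a)) by exact (Series_correct a Ea).
  apply is_lim_seq_spec in Hlim; destruct (Hlim (mkposreal eps Heps)) as [N HN].
  specialize (HN N (le_n N)); simpl in HN; rewrite sum_n_Reals in HN.
  exists N; set (t := fun n => if (n <=? N)%nat then 0 else a n).
  assert (Et : ex_series t).
  { apply (ex_series_incr_n t (S N)), (ex_series_ext (fun k => a (S N + k)%nat)).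
    - intros k; unfold t; destruct (Nat.leb_spec (S N + k) N); [lia | reflexivity].
    - exact (proj1 (ex_series_incr_n a (S N)) Ea). }
  rewrite (Series_incr_n t (S N)) by (lia || exact Et); simpl Nat.pred.
  rewrite sum_f_R0_zero by (intros n Hn; unfold t; destruct (Nat.leb_spec n N); [reflexivity | lia]).
  rewrite (Series_ext _ (fun k => a (S N + k)%nat))
    by (intros k; unfold t; destruct (Nat.leb_spec (S N + k) N); [lia | reflexivity]).
  rewrite (Series_incr_n a (S N)) in HN by (lia || exact Ea); simpl Nat.pred in HN.
  apply Rabs_def2 in HN; lra.
Qed.

Lemma sqn_eq (z : C) : sqn z = Re z ^ 2 + Im z ^ 2.
Proof. unfold sqn, Cmod; rewrite pow2_sqrt; [reflexivity | nra]. Qed.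

Lemma sqn_ge0 (z : C) : 0 <= sqn z.
Proof. rewrite sqn_eq; nra. Qed.

Lemma sqn_scal (r : R) (z : C) : sqn (RtoC r * z) = r ^ 2 * sqn z.
Proof. rewrite !sqn_eq; destruct z; simpl; ring. Qed.

Lemma Re_conj_scal_mult (a b : R) (z : C) :
  Re (Cconj (RtoC a * z) * (RtoC b * z)) = a * b * sqn z.
Proof. rewrite sqn_eq; destruct z; simpl; ring. Qed.

Definition wl2 (w : nat -> R) (u : seqC) : Prop := ex_series (fun n => w n * sqn (u n)).

Lemma wl2_le (w w' : nat -> R) (c : R) (u : seqC) :
  (forall n, 0 <= w n <= c * w' n) -> wl2 w' u -> wl2 w u.
Proof.
  intros Hw Hu; apply (ex_series_le_nonneg _ _) with (2 := ex_series_scal_l c _ Hu).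
  intros n; specialize (Hw n); pose proof (sqn_ge0 (u n)); split; [nra |].
  rewrite <- Rmult_assoc; apply Rmult_le_compat_r; [lra | apply Hw].
Qed.

Lemma cre_iter_val k v n :
  Nat.iter k cre v n = (RtoC (sqrt (falling k n)) * v (n - k)%nat)%C.
Proof.
  revert n; induction k as [|k IH]; intros n.
  - rewrite Nat.sub_0_r; cbn; rewrite sqrt_1; ring.
  - rewrite Nat.iter_succ; destruct n as [|n]; cbn [cre falling].
    + rewrite sqrt_0; ring.
    + rewrite IH, sqrt_mult by (apply pos_INR || apply falling_ge0).
      rewrite RtoC_mult; simpl (S n - S k)%nat; ring.
Qed.

Section Fock.

Variable l : nat.

Definition Lam_eig (n : nat) : R := 1 + falling l n.

Lemma Lam_eig_ge1 n : 1 <= Lam_eig n.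
Proof. pose proof (falling_ge0 l n); unfold Lam_eig; lra. Qed.

Lemma Lam_eig_pow_le_mono k n m : (n <= m)%nat -> Lam_eig n ^ k <= Lam_eig m ^ k.
Proof.
  intros Hnm; apply pow_incr; pose proof (Lam_eig_ge1 n).
  pose proof (falling_le_mono l n m Hnm); unfold Lam_eig in *; lra.
Qed.

Lemma Lop_val v n : Lop l v n = (RtoC (sqrt (falling l (n + l))) * v (n + l)%nat)%C.
Proof.
  unfold Lop; revert v; induction l as [|l' IH]; intros v.
  - rewrite Nat.add_0_r; cbn; rewrite sqrt_1; ring.
  - rewrite Nat.iter_succ_r, IH, Nat.add_succ_r; unfold ann; cbn [falling].
    rewrite sqrt_mult by (apply pos_INR || apply falling_ge0).
    rewrite RtoC_mult; ring.
Qed.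

Lemma LdagL_val u n : LdagL l u n = (RtoC (falling l n) * u n)%C.
Proof.
  unfold LdagL; rewrite cre_iter_val, Lop_val.
  destruct (Nat.le_gt_cases l n) as [Hln | Hnl].
  - rewrite Nat.sub_add, Cmult_assoc, <- RtoC_mult, sqrt_sqrt by (lia || apply falling_ge0).
    reflexivity.
  - rewrite falling_lt, sqrt_0 by exact Hnl; ring.
Qed.

Lemma Lam_pow_val i u n : Lam_pow l i u n = (RtoC (Lam_eig n ^ i) * u n)%C.
Proof.
  induction i as [|i IH].
  - cbn; ring.
  - unfold Lam_pow; rewrite Nat.iter_succ; fold (Lam_pow l i u).
    unfold Lam, seq_add; rewrite LdagL_val, IH; unfold Lam_eig.
    rewrite <- tech_pow_Rmult, RtoC_mult, RtoC_plus; ring.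
Qed.

Lemma sqn_Lam_pow i u n : sqn (Lam_pow l i u n) = Lam_eig n ^ (2 * i) * sqn (u n).
Proof. rewrite Lam_pow_val, sqn_scal, <- pow_mult, Nat.mul_comm; reflexivity. Qed.

Lemma sqn_Lop v n : sqn (Lop l v n) = falling l (n + l) * sqn (v (n + l)%nat).
Proof. rewrite Lop_val, sqn_scal, pow2_sqrt by apply falling_ge0; reflexivity. Qed.

Lemma l2_Lam_pow i u : l2 (Lam_pow l i u) <-> wl2 (fun n => Lam_eig n ^ (2 * i)) u.
Proof. split; apply ex_series_ext; intros n; rewrite sqn_Lam_pow; reflexivity. Qed.

Lemma norm2_Lam_pow i u :
  norm2 (Lam_pow l i u) = Series (fun n => Lam_eig n ^ (2 * i) * sqn (u n)).
Proof. apply Series_ext; intros n; apply sqn_Lam_pow. Qed.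

(* [L] sends [|n + l>] to a multiple of [|n>], so series against [L v] are shifted
   series against [v]; the shift is harmless because [falling l] vanishes below [l]. *)
Lemma l2_Lop v : l2 (Lop l v) <-> wl2 (falling l) v.
Proof.
  unfold l2, wl2; rewrite <- (ex_series_shift_iff (fun n => falling l n * sqn (v n)) l).
  split; apply ex_series_ext; intros n; rewrite sqn_Lop; reflexivity.
Qed.

Lemma norm2_Lop v : wl2 (falling l) v ->
  norm2 (Lop l v) = Series (fun n => falling l n * sqn (v n)).
Proof.
  intros Hv; unfold norm2.
  rewrite <- (Series_shift_vanishing (fun n => falling l n * sqn (v n)) l) by
    (exact Hv || (intros n Hn; rewrite falling_lt by exact Hn; ring)).
  apply Series_ext; intros n; apply sqn_Lop.
Qed.

Lemma Lop_weighted_le (w : nat -> R) v :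
  (forall n, 0 <= w n <= w (n + l)%nat) -> wl2 (fun n => w n * falling l n) v ->
  wl2 w (Lop l v) /\
  Series (fun n => w n * sqn (Lop l v n)) <= Series (fun n => w n * falling l n * sqn (v n)).
Proof.
  intros Hw Hv; set (b := fun n => w n * falling l n * sqn (v n)).
  assert (Hb : forall n, 0 <= w n * sqn (Lop l v n) <= b (n + l)%nat).
  { intros n; rewrite sqn_Lop; unfold b.
    pose proof (Hw n); pose proof (falling_ge0 l (n + l)); pose proof (sqn_ge0 (v (n + l)%nat)).
    split; [apply Rmult_le_pos; [lra | apply Rmult_le_pos; lra] |].
    rewrite (Rmult_assoc (w (n + l)%nat)); apply Rmult_le_compat_r; [apply Rmult_le_pos |]; lra. }
  assert (Eb : ex_series (fun n => b (n + l)%nat)) by (apply ex_series_shift_iff; exact Hv).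
  split; [exact (ex_series_le_nonneg _ _ Hb Eb) |].
  rewrite <- (Series_shift_vanishing b l); [exact (Series_le _ _ Hb Eb) | | exact Hv].
  intros n Hn; unfold b; rewrite falling_lt by exact Hn; ring.
Qed.

End Fock.

Section Sobolev.

Variable l : nat.

Lemma Lam_eig_pow_S k n :
  Lam_eig l n ^ S k = Lam_eig l n ^ k + falling l n * Lam_eig l n ^ k.
Proof. unfold Lam_eig; simpl; ring. Qed.

Lemma wl2_Lam_eig_pow_le k k' u : (k <= k')%nat ->
  wl2 (fun n => Lam_eig l n ^ k') u -> wl2 (fun n => Lam_eig l n ^ k) u.
Proof.
  intros Hk; apply (wl2_le _ _ 1); intros n; pose proof (Lam_eig_ge1 l n).
  split; [apply pow_le; lra | rewrite Rmult_1_l; apply Rle_pow; assumption].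
Qed.

Lemma wl2_falling_Lam_pow j u :
  wl2 (falling l) (Lam_pow l j u) <->
  ex_series (fun n => falling l n * Lam_eig l n ^ (2 * j) * sqn (u n)).
Proof.
  split; apply ex_series_ext; intros n; rewrite sqn_Lam_pow, Rmult_assoc; reflexivity.
Qed.

Lemma inH_iff_wl2 k u : inH l k u <-> wl2 (fun n => Lam_eig l n ^ k) u.
Proof.
  unfold inH; destruct (Nat.Even_or_Odd k) as [[j ->] | [j ->]].
  - rewrite Nat.div2_double, Nat.odd_even; split.
    + intros [H _]; apply l2_Lam_pow, H; lia.
    + intros H; split; [| discriminate].
      intros i Hi; apply l2_Lam_pow, (wl2_Lam_eig_pow_le _ (2 * j)); [lia | exact H].
  - rewrite Nat.add_1_r, Nat.div2_succ_double, Nat.odd_succ, Nat.even_mul; cbn [orb Nat.even].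
    assert (Hsplit : wl2 (fun n => Lam_eig l n ^ S (2 * j)) u <->
      wl2 (fun n => Lam_eig l n ^ (2 * j)) u /\ wl2 (falling l) (Lam_pow l j u)).
    { rewrite wl2_falling_Lam_pow; unfold wl2.
      rewrite ex_series_plus_nonneg_iff.
      - split; apply ex_series_ext; intros n; rewrite Lam_eig_pow_S, Rmult_plus_distr_r; reflexivity.
      - intros n; apply Rmult_le_pos; [apply pow_le | apply sqn_ge0].
        pose proof (Lam_eig_ge1 l n); lra.
      - intros n; apply Rmult_le_pos; [apply Rmult_le_pos | apply sqn_ge0];
          [apply falling_ge0 | apply pow_le]; pose proof (Lam_eig_ge1 l n); lra. }
    rewrite Hsplit, <- l2_Lop; split.
    + intros [H1 H2]; split; [apply l2_Lam_pow, H1; lia | exact (H2 eq_refl)].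
    + intros [H1 H2]; split; [| intros _; exact H2].
      intros i Hi; apply l2_Lam_pow, (wl2_Lam_eig_pow_le _ (2 * j)); [lia | exact H1].
Qed.

Lemma normH_wl2 k u : inH l k u ->
  normH l k u = sqrt (Series (fun n => Lam_eig l n ^ k * sqn (u n))).
Proof.
  intros Hu; pose proof (proj1 (inH_iff_wl2 k u) Hu) as Hw.
  unfold normH; f_equal; destruct (Nat.Even_or_Odd k) as [[j ->] | [j ->]].
  - rewrite Nat.div2_double, Nat.odd_even, Rplus_0_r; apply norm2_Lam_pow.
  - rewrite Nat.add_1_r in *.
    rewrite Nat.div2_succ_double, Nat.odd_succ, Nat.even_mul; cbn [orb Nat.even].
    assert (HL : wl2 (falling l) (Lam_pow l j u)).
    { apply l2_Lop; rewrite <- (Nat.div2_succ_double j).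
      apply (proj2 Hu); rewrite Nat.odd_succ, Nat.even_mul; reflexivity. }
    assert (HE : wl2 (fun n => Lam_eig l n ^ (2 * j)) u)
      by (apply (wl2_Lam_eig_pow_le _ (S (2 * j))); [lia | exact Hw]).
    rewrite norm2_Lam_pow, norm2_Lop by exact HL.
    rewrite <- Series_plus by (exact HE || exact HL).
    apply Series_ext; intros n; rewrite sqn_Lam_pow, Lam_eig_pow_S; ring.
Qed.

End Sobolev.

Lemma Lam_eig_pow_le_poly l k n : Lam_eig l n ^ k <= 2 ^ k * (1 + INR n ^ (k * l)).
Proof.
  set (x := INR n ^ l); assert (Hx : 0 <= x) by apply pow_le, pos_INR.
  rewrite Nat.mul_comm, pow_mult; fold x.
  apply Rle_trans with ((1 + x) ^ k).
  { apply pow_incr; pose proof (falling_ge0 l n); pose proof (falling_le_pow l n).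
    unfold Lam_eig, x in *; lra. }
  assert (0 <= x ^ k) by (apply pow_le; lra).
  assert (0 <= 2 ^ k) by (apply pow_le; lra).
  destruct (Rle_dec x 1).
  - assert ((1 + x) ^ k <= 2 ^ k) by (apply pow_incr; lra); nra.
  - assert ((1 + x) ^ k <= (2 * x) ^ k) by (apply pow_incr; lra).
    rewrite Rpow_mult_distr in *; nra.
Qed.

Lemma pow_le_Lam_eig l n : (1 <= l)%nat -> INR n ^ l <= INR (2 * l) ^ l * Lam_eig l n.
Proof.
  intros Hl; pose proof (Lam_eig_ge1 l n).
  assert (H2l : 2 <= INR (2 * l)) by (rewrite mult_INR; apply le_INR in Hl; simpl in *; lra).
  assert (0 <= INR (2 * l) ^ l) by (apply pow_le; lra).
  destruct (Nat.lt_ge_cases n (2 * l)) as [Hn | Hn].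
  - apply Rle_trans with (INR (2 * l) ^ l); [| nra].
    apply pow_incr; split; [apply pos_INR | apply le_INR; lia].
  - apply Rle_trans with ((2 * (INR n - INR l + 1)) ^ l).
    { apply pow_incr; apply le_INR in Hn; rewrite mult_INR in Hn; simpl in Hn.
      pose proof (pos_INR n); lra. }
    rewrite Rpow_mult_distr; apply Rmult_le_compat.
    + apply pow_le; lra.
    + apply pow_le; apply le_INR in Hn; rewrite mult_INR in Hn; simpl in Hn; pose proof (pos_INR l); lra.
    + apply pow_incr; lra.
    + apply (Rle_trans _ _ _ (pow_le_falling l n ltac:(lia))); unfold Lam_eig; lra.
Qed.

Lemma poly_le_Lam_eig_pow l k n : (1 <= l)%nat ->
  1 + INR n ^ (k * l) <= (1 + INR (2 * l) ^ (k * l)) * Lam_eig l n ^ k.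
Proof.
  intros Hl; assert (1 <= Lam_eig l n ^ k) by (apply pow_R1_Rle, Lam_eig_ge1).
  assert (INR n ^ (k * l) <= INR (2 * l) ^ (k * l) * Lam_eig l n ^ k).
  { rewrite Nat.mul_comm, !pow_mult, <- Rpow_mult_distr.
    apply pow_incr; split; [apply pow_le, pos_INR | apply pow_le_Lam_eig, Hl]. }
  lra.
Qed.

Lemma inH_iff_poly_weight l k u : (1 <= l)%nat ->
  inH l k u <-> ex_series (fun m => (1 + INR m ^ (k * l)) * sqn (u m)).
Proof.
  intros Hl; rewrite inH_iff_wl2; split.
  - apply (wl2_le _ _ (1 + INR (2 * l) ^ (k * l))); intros n; split; [pose proof (pow_le (INR n) (k * l) (pos_INR n)); lra |].
    apply poly_le_Lam_eig_pow, Hl.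
  - apply (wl2_le _ _ (2 ^ k)); intros n.
    split; [pose proof (Lam_eig_ge1 l n); apply pow_le; lra |].
    apply Lam_eig_pow_le_poly.
Qed.

Lemma Cconj_RtoC (r : R) : Cconj (RtoC r) = RtoC r.
Proof. apply injective_projections; simpl; ring. Qed.

Lemma l2_wl2 u : l2 u <-> wl2 (fun _ => 1) u.
Proof. split; apply ex_series_ext; intros n; rewrite Rmult_1_l; reflexivity. Qed.

Lemma inner_single (u z : seqC) m :
  (forall n, n <> m -> z n = 0) -> inner u z = (Cconj (u m) * z m)%C.
Proof.
  intros Hz; unfold inner.
  rewrite !(Series_single _ m) by (intros n Hn; rewrite (Hz n Hn), Cmult_0_r; reflexivity).
  apply injective_projections; reflexivity.
Qed.

Section Diagonal.

Variables (D : seqC -> Prop) (T : seqC -> seqC) (d : nat -> R).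
Hypothesis D_wl2 : forall u, D u <-> wl2 (fun n => 1 + d n ^ 2) u.
Hypothesis T_diag : forall u n, T u n = (RtoC (d n) * u n)%C.

Lemma diag_dom_l2 u : D u -> l2 u.
Proof.
  rewrite D_wl2, l2_wl2; apply (wl2_le _ _ 1); intros n; pose proof (pow2_ge_0 (d n)); lra.
Qed.

Lemma diag_l2 u : D u -> l2 (T u).
Proof.
  rewrite D_wl2; intros Hu; apply (ex_series_le_nonneg _ _) with (2 := Hu); intros n.
  pose proof (pow2_ge_0 (d n)); pose proof (sqn_ge0 (u n)).
  rewrite T_diag, sqn_scal; split; [nra | lra].
Qed.

Lemma diag_dense : dense_dom D.
Proof.
  split; [exact diag_dom_l2 |].
  intros v eps Hv Heps; destruct (Series_tail_lt _ eps Hv Heps) as [N HN].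
  exists (fun n => if (n <=? N)%nat then v n else 0); split.
  - apply D_wl2, (ex_series_finite_support _ N); intros n Hn.
    destruct (Nat.leb_spec n N); [lia |]; rewrite sqn_eq; simpl; ring.
  - unfold norm2; erewrite Series_ext; [exact HN |]; intros n; unfold seq_sub.
    destruct (n <=? N)%nat; rewrite !sqn_eq; destruct (v n); simpl; ring.
Qed.

(* Testing the adjoint relation against the basis vector [|m>] reads off [w m = d m v m]. *)
Lemma diag_adj_graph v w : adj_graph D T v w -> D v /\ w = T v.
Proof.
  intros [Hv [Hw Hvw]].
  assert (Hpt : forall m, w m = (RtoC (d m) * v m)%C).
  { intros m; set (e := fun n => if Nat.eqb n m then RtoC 1 else RtoC 0).
    assert (He : forall n, n <> m -> e n = 0) by (intros n Hn; unfold e; rewrite (proj2 (Nat.eqb_neq n m) Hn); reflexivity).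
    assert (Hem : e m = 1) by (unfold e; rewrite Nat.eqb_refl; reflexivity).
    assert (De : D e).
    { apply D_wl2, (ex_series_finite_support _ m); intros n Hn.
      rewrite He, sqn_eq by lia; simpl; ring. }
    specialize (Hvw e De).
    rewrite !(inner_single _ _ m) in Hvw by (exact He || (intros n Hn; rewrite T_diag, He by exact Hn; apply Cmult_0_r)).
    rewrite T_diag, Hem in Hvw.
    apply (f_equal Cconj) in Hvw; rewrite !Cmult_conj, !Cconj_conj, !Cconj_RtoC in Hvw.
    rewrite <- (Cmult_1_r (w m)), <- Hvw; ring. }
  split.
  - apply D_wl2; eapply ex_series_ext; [| exact (ex_series_plus _ _ Hv Hw)].
    intros n; cbv beta; rewrite Hpt, sqn_scal, Rmult_plus_distr_r, Rmult_1_l; reflexivity.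
  - apply functional_extensionality; intros n; rewrite T_diag; apply Hpt.
Qed.

Lemma self_adjoint_diag : self_adjoint D T.
Proof.
  split; [exact diag_dense | split; [exact diag_l2 |]].
  intros v w; split; [exact (diag_adj_graph v w) |].
  intros [Dv ->]; split; [exact (diag_dom_l2 v Dv) | split; [exact (diag_l2 v Dv) |]].
  intros u _; unfold inner; f_equal; apply Series_ext; intros n;
    rewrite !T_diag, Cmult_conj, Cconj_RtoC; f_equal; ring.
Qed.

End Diagonal.

Lemma LdagL_self_adjoint l : self_adjoint (inH l 2) (LdagL l).
Proof.
  apply (self_adjoint_diag _ _ (falling l)); [| exact (LdagL_val l)].
  intros u; rewrite inH_iff_wl2; pose proof (falling_ge0 l).
  split; [apply (wl2_le _ _ 1) | apply (wl2_le _ _ 2)]; intros n; specialize (H n);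
    pose proof (pow2_ge_0 (falling l n - 1)); unfold Lam_eig; split; nra.
Qed.

Lemma wl2_Lam_eig_pow_falling l k k' u : (k < k')%nat ->
  wl2 (fun n => Lam_eig l n ^ k') u -> wl2 (fun n => Lam_eig l n ^ k * falling l n) u.
Proof.
  intros Hk; apply (wl2_le _ _ 1); intros n.
  pose proof (Lam_eig_ge1 l n); pose proof (falling_ge0 l n).
  assert (0 <= Lam_eig l n ^ k) by (apply pow_le; lra).
  assert (Lam_eig l n ^ S k <= Lam_eig l n ^ k') by (apply Rle_pow; [lra | lia]).
  rewrite Lam_eig_pow_S in *; nra.
Qed.

Lemma Lop_bounded_H l m : exists C : R, 0 <= C /\
  forall u, inH l (S m) u ->
    inH l m (Lop l u) /\ normH l m (Lop l u) <= C * normH l (S m) u.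
Proof.
  exists 1; split; [lra |]; intros u Hu.
  pose proof (proj1 (inH_iff_wl2 l _ u) Hu) as Hw.
  destruct (Lop_weighted_le l (fun n => Lam_eig l n ^ m) u) as [HL Hle].
  - intros n; split; [pose proof (Lam_eig_ge1 l n); apply pow_le; lra |].
    apply Lam_eig_pow_le_mono; lia.
  - exact (wl2_Lam_eig_pow_falling l m (S m) u (Nat.lt_succ_diag_r m) Hw).
  - assert (HLm : inH l m (Lop l u)) by (apply inH_iff_wl2; exact HL).
    split; [exact HLm |].
    rewrite Rmult_1_l, (normH_wl2 l m _ HLm), (normH_wl2 l (S m) _ Hu).
    apply sqrt_le_1_alt, (Rle_trans _ _ _ Hle), Series_le; [| exact Hw].
    intros n; rewrite Lam_eig_pow_S.
    pose proof (Lam_eig_ge1 l n); pose proof (falling_ge0 l n); pose proof (sqn_ge0 (u n)).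
    assert (0 <= Lam_eig l n ^ m) by (apply pow_le; lra).
    split; [apply Rmult_le_pos; [apply Rmult_le_pos |] |]; nra.
Qed.

Lemma Re_inner_Lam_pow_G l i u :
  Re (inner (Lam_pow l i (Gop l u)) (Lam_pow l i u)) =
  - / 2 * Series (fun n => Lam_eig l n ^ (2 * i) * falling l n * sqn (u n)).
Proof.
  rewrite <- Series_scal_l; apply Series_ext; intros n.
  rewrite !Lam_pow_val; unfold Gop, seq_scal; rewrite LdagL_val.
  replace (RtoC (Lam_eig l n ^ i) * (RtoC (- / 2) * (RtoC (falling l n) * u n)))%C
    with (RtoC (Lam_eig l n ^ i * (- / 2) * falling l n) * u n)%C by (rewrite !RtoC_mult; ring).
  rewrite Re_conj_scal_mult, Nat.mul_comm, pow_mult; ring.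
Qed.

(* [2 Re <Λ^i G u|Λ^i u>] is [-Σ Λ(n)^(2i) f(n) |u_n|^2], and [‖Λ^i L u‖^2] is the
   same sum with each weight [Λ(n)^(2i)] replaced by the smaller [Λ(n - l)^(2i)]. *)
Lemma Lam_pow_dissipative l i u :
  wl2 (fun n => Lam_eig l n ^ (2 * i) * falling l n) u ->
  2 * Re (inner (Lam_pow l i (Gop l u)) (Lam_pow l i u)) + norm2 (Lam_pow l i (Lop l u)) <= 0.
Proof.
  intros Hu; rewrite Re_inner_Lam_pow_G, norm2_Lam_pow.
  destruct (Lop_weighted_le l (fun n => Lam_eig l n ^ (2 * i)) u) as [_ Hle]; [| exact Hu |].
  - intros n; split; [pose proof (Lam_eig_ge1 l n); apply pow_le; lra |].
    apply Lam_eig_pow_le_mono; lia.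
  - lra.
Qed.

Theorem mainTheorem12 (l : nat) (hl : (1 <= l)%nat) :
  (forall (k : nat) (u : seqC),
      inH l k u <-> ex_series (fun m => (1 + INR m ^ (k * l)) * sqn (u m)))
  /\
  self_adjoint (inH l 2) (LdagL l)
  /\
  (forall m : nat, exists C : R, 0 <= C /\
      forall u, inH l (S m) u ->
        inH l m (Lop l u) /\ normH l m (Lop l u) <= C * normH l (S m) u)
  /\
  (forall u, inH l 6 u ->
      2 * Re (inner (Lam_pow l 2 (Gop l u)) (Lam_pow l 2 u))
        + norm2 (Lam_pow l 2 (Lop l u)) <= 0)
  /\
  (forall u, inH l 6 u ->
      2 * Re (inner (Lam_pow l 2 (Gop l u)) (Lam_pow l 2 u))
        + norm2 (Lam_pow l 2 (Lop l u)) <= 0 * norm2 (Lam_pow l 2 u)).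
Proof.
  assert (Hdiss : forall u, inH l 6 u ->
    2 * Re (inner (Lam_pow l 2 (Gop l u)) (Lam_pow l 2 u))
      + norm2 (Lam_pow l 2 (Lop l u)) <= 0).
  { intros u Hu; apply Lam_pow_dissipative, (wl2_Lam_eig_pow_falling l _ 6); [lia |].
    apply inH_iff_wl2, Hu. }
  split; [intros k u; apply inH_iff_poly_weight, hl |].
  split; [apply LdagL_self_adjoint |].
  split; [apply Lop_bounded_H |].
  split; [exact Hdiss |].
  intros u Hu; rewrite Rmult_0_l; exact (Hdiss u Hu).
Qed.
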